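(* Let $P$ be a finite $p$-group which is neither cyclic nor generalized quaternion, and let $1\neq H<P$ be a proper non-trivial subgroup. Then there exist subgroups $K'\trianglelefteq H'\le P$ with proper inclusions $K'<H<H'$ such that $H'/K'$ is elementary abelian (necessarily of $p$-rank at least two).
   Context: The generalized quaternion group of order $2^n$, $n\ge3$, is $Q_{2^n}=\langle x,y\mid x^{2^{n-1}}=1,\ y^2=x^{2^{n-2}},\ yxy^{-1}=x^{-1}\rangle$ (only relevant for $p=2$). *)

From mathcomp Require Import all_boot all_fingroup all_solvable.
Set Implicit Arguments. Unset Strict Implicit. Unset Printing Implicit Defensive.
Local Open Scope group_scope.

(* G is a generalized quaternion group: isomorphic to Q_(2^n) for some n >= 3
   (MathComp's 'Q_m from extremal.v, the group
   <x, y | x^(2^(n-1)) = 1, y^2 = x^(2^(n-2)), x^y = x^-1>). *)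
Definition gen_quaternion (gT : finGroupType) (G : {set gT}) : Prop :=
  exists n : nat, 2 < n /\ G \isog 'Q_(2 ^ n).

(** If H < H' <= P with |H' : H| = p and H' not cyclic, then K' := 'Phi(H')
    works: H is maximal in H', so 'Phi(H') <= H, and the inclusion is proper
    because H' / 'Phi(H') is not cyclic.  Such an H' is found inside the
    normaliser N := 'N_P(H), which properly contains H.  If H is not cyclic,
    take the preimage of any subgroup of order p of N / H; if N has an element
    of order p outside H, take the preimage of its image in N / H.  Otherwise
    H is cyclic and 'Ohm_1(N) = 'Ohm_1(H) has order p, so N is cyclic or
    generalised quaternion.  Unless N itself has the required form, H is then
    determined inside N by its order, hence normalised by 'N_P(N); this forces
    'N_P(N) = N, so N = P by nilpotence, and P would be cyclic or generalised
    quaternion. *)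

From mathcomp Require Import all_boot all_fingroup all_solvable.
Set Implicit Arguments. Unset Strict Implicit. Unset Printing Implicit Defensive.
Local Open Scope group_scope.

Lemma quaternion_normal_sub_cycle (gT : finGroupType) (Q K : {group gT}) n x y :
    2 < n -> extremal_generators Q 2 n (x, y) -> Q \isog 'Q_(2 ^ n) ->
  K <| Q -> 4 <= #|Q : K| -> K \subset <[x]>.
Proof.
move=> n_gt2 genQ isoQ /andP[sKQ nKQ] iQK; have [oQ Qx _ _] := genQ.
have [[_ _ invX] [defQ' _ oQ' _] _ _ _] := quaternion_structure n_gt2 genQ isoQ.
apply/subsetP=> t Kt; apply/idPn=> notXt.
have X't : t \in Q :\: <[x]> by rewrite inE notXt (subsetP sKQ).
have sQ'K : Q^`(1) \subset K.
  rewrite defQ' cycle_subG -groupV expgS expg1 invMg.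
  have <- : [~ x, t] = x^-1 * x^-1 by rewrite /commg invX ?cycle_id.
  by apply: (subsetP _ _ (mem_commg Qx Kt)); rewrite commg_subr.
have ltQ'K : 1 < #|K : Q^`(1)|.
  rewrite indexg_gt1 /= defQ'; apply: contra notXt => /subsetP/(_ t Kt).
  exact: (subsetP (cycleX x 2)).
have iQQ' : #|Q : Q^`(1)| = 4.
  rewrite -divgS ?der_sub // oQ oQ'.
  case: n n_gt2 {genQ isoQ oQ oQ'} => [|[|n]] // _.
  by rewrite !expnS mulnA mulnK ?expn_gt0.
move: iQK; rewrite -iQQ' -(Lagrange_index sKQ sQ'K) -[X in _ <= X]muln1.
by rewrite leq_pmul2l ?indexg_gt0 // leqNgt ltQ'K.
Qed.

Lemma quaternion_normal_eq (gT : finGroupType) (Q K L : {group gT}) n :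
    2 < n -> Q \isog 'Q_(2 ^ n) -> K <| Q -> L <| Q ->
  4 <= #|Q : K| -> #|K| = #|L| -> K :=: L.
Proof.
move=> n_gt2 isoQ nsKQ nsLQ iQK oKL.
have [[x y] genQ _] := generators_quaternion n_gt2 isoQ.
have iQL : 4 <= #|Q : L| by rewrite -divgS ?normal_sub // -oKL divgS ?normal_sub.
apply/eqP; rewrite (eq_subG_cyclic (cycle_cyclic x)) ?oKL //.
  exact: quaternion_normal_sub_cycle genQ isoQ nsKQ iQK.
exact: quaternion_normal_sub_cycle genQ isoQ nsLQ iQL.
Qed.

Lemma Phi_proper_maximal (gT : finGroupType) (p : nat) (G M : {group gT}) :
  p.-group G -> maximal M G -> ~~ cyclic G -> 'Phi(G) \proper M.
Proof.
move=> pG maxM ncG.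
have ntG : G :!=: 1 by apply: contraNneq ncG => ->; exact: cyclic1.
have [p_pr _ _] := pgroup_pdiv pG ntG.
rewrite properEneq Phi_sub_max // andbT.
apply: contra ncG => /eqP defPhi; apply: Phi_quotient_cyclic; rewrite defPhi.
rewrite prime_cyclic // card_quotient ?normal_norm ?(p_maximal_normal pG) //.
by rewrite (p_maximal_index pG maxM).
Qed.

Section NoncyclicOvergroup.

Variables (gT : finGroupType) (p : nat) (P H : {group gT}).
Hypotheses (p_pr : prime p) (pP : p.-group P) (sHP : H \subset P).

Let N := 'N_P(H)%G.
Let sNP : N \subset P := subsetIl _ _.
Let pN : p.-group N := pgroupS sNP pP.
Let nsHN : H <| N := normalSG sHP.

Lemma cosetpre_cycle_overgroup {xb : coset_of H} :
    xb \in N / H -> #[xb] = p ->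
  [/\ H \subset coset H @*^-1 <[xb]>, coset H @*^-1 <[xb]> \subset P
    & #|coset H @*^-1 <[xb]> : H| = p].
Proof.
move=> Nxb oxb; split; first exact: sub_cosetpre.
  by apply: subset_trans sNP; rewrite sub_cosetpre_quo // cycle_subG.
by rewrite -divgS ?sub_cosetpre // card_cosetpre -orderE oxb mulKn.
Qed.

Lemma noncyclic_overgroup_of_noncyclic :
    H \proper P -> ~~ cyclic H ->
  exists H' : {group gT},
    [/\ H \subset H', H' \subset P, #|H' : H| = p & ~~ cyclic H'].
Proof.
move=> prHP ncH.
have prHN : H \proper N := nilpotent_proper_norm (pgroup_nil pP) prHP.
have ntNH : N / H != 1.
  by rewrite -cardG_gt1 card_quotient ?normal_norm // indexg_gt1 proper_subn.
have [_ p_dv_NH _] := pgroup_pdiv (quotient_pgroup H pN) ntNH.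
have [xb Nxb oxb] := Cauchy p_pr p_dv_NH.
have [sHW sWP iWH] := cosetpre_cycle_overgroup Nxb oxb.
exists (coset H @*^-1 <[xb]>)%G; split=> //.
exact: contra (cyclicS sHW) ncH.
Qed.

Lemma noncyclic_overgroup_of_Ohm1 :
    H :!=: 1 -> ~~ ('Ohm_1(N) \subset H) ->
  exists H' : {group gT},
    [/\ H \subset H', H' \subset P, #|H' : H| = p & ~~ cyclic H'].
Proof.
move=> ntH; rewrite Ohm1Eprime gen_subG.
case/subsetPn=> x /setIdP[Nx pr_x] notHx.
have ox : #[x] = p.
  by move: (mem_p_elt pN Nx); rewrite /p_elt (pnatE _ pr_x) => /eqP.
have nHx : x \in 'N(H) := subsetP (subsetIr _ _) x Nx.
have oxb : #[coset H x] = p.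
  apply: nt_prime_order p_pr _ _.
    by rewrite -morphX // -ox expg_order morph1.
  by apply: contra notHx => /eqP; apply: coset_idr.
have [sHW sWP iWH] := cosetpre_cycle_overgroup (mem_quotient H Nx) oxb.
exists (coset H @*^-1 <[coset H x]>)%G; split=> //; apply/negP=> cycW.
have Wx : x \in coset H @*^-1 <[coset H x]> by rewrite mem_morphpre // cycle_id.
(* a cyclic group has only one subgroup of order p *)
case/negP: notHx; rewrite -cycle_subG -(cardSg_cyclic cycW) ?cycle_subG //.
rewrite -orderE ox.
by have [] := pgroup_pdiv (pgroupS sHP pP) ntH.
Qed.

Lemma Ohm1_normalizer_prime :
  cyclic H -> H :!=: 1 -> 'Ohm_1(N) \subset H -> #|'Ohm_1(N)| = p.
Proof.
move=> cH ntH sOH; rewrite -(Ohm1_cyclic_pgroup_prime cH (pgroupS sHP pP) ntH).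
suff -> : 'Ohm_1(N) = 'Ohm_1(H) by [].
apply/eqP; rewrite eqEsubset (OhmS _ (normal_sub nsHN)) andbT.
by rewrite -{1}Ohm_id OhmS.
Qed.

Lemma norm_normalizer_norms :
    cyclic H -> H :!=: 1 -> #|'Ohm_1(N)| = p ->
    ~~ (~~ cyclic N && (#|N : H| == p)) ->
  'N_P(N) \subset 'N(H).
Proof.
move=> cH ntH oO notN; have nNN : 'N_P(N) \subset 'N(N) := subsetIr _ _.
have [cN | ncN] := boolP (cyclic N).
  by apply: char_norm_trans nNN; rewrite sub_cyclic_char ?normal_sub.
have ntN : N :!=: 1 := subG1_contra (normal_sub nsHN) ntH.
move/(prime_Ohm1P pN ntN): oO; rewrite (negPf ncN) /=.
case/andP=> /eqP p2 /eqP/quaternion_classP[n n_gt2 isoN].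
rewrite ncN p2 /= in notN.
have iNH : 4 <= #|N : H|.
  have ltHN : 1 < #|N : H|.
    by rewrite indexg_gt1; apply: contra ncN => /cyclicS->.
  have [k iNH] := p_natP (pnat_dvd (dvdn_indexg N H) pN).
  move: ltHN notN; rewrite iNH p2 leq_eqVlt => /orP[/eqP<- /negP[] // | gt2 _].
  move: gt2; rewrite -[(2 < _)%N]/(2 ^ 1 < 2 ^ k)%N -[4%N]/(2 ^ 2)%N.
  by rewrite ltn_exp2l ?leq_exp2l.
apply/subsetP=> g /setIP[_ nNg]; apply/normP/esym.
have nsHgN : (H :^ g)%G <| N.
  by move: nsHN; rewrite -(normalJ _ _ g) (normP nNg).
by apply: (quaternion_normal_eq n_gt2 isoN nsHN nsHgN iNH); rewrite cardJg.
Qed.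

Lemma normal_of_norm_normalizer : 'N_P(N) \subset 'N(H) -> H <| P.
Proof.
move=> nHNN; have defP : P :=: N.
  by apply: nilpotent_sub_norm (pgroup_nil pP) sNP _; rewrite subsetI subsetIl.
by rewrite /normal sHP {1}defP subsetIr.
Qed.

Lemma exists_noncyclic_overgroup :
    ~~ cyclic P -> ~ gen_quaternion P -> H \proper P -> H :!=: 1 ->
  exists H' : {group gT},
    [/\ H \subset H', H' \subset P, #|H' : H| = p & ~~ cyclic H'].
Proof.
move=> ncP nqP prHP ntH.
have [cH | ncH] := boolP (cyclic H); last exact: noncyclic_overgroup_of_noncyclic.
have [sOH | nsOH] := boolP ('Ohm_1(N) \subset H); last first.
  exact: noncyclic_overgroup_of_Ohm1.
have oO := Ohm1_normalizer_prime cH ntH sOH.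
have [/andP[ncN /eqP iNH] | notN] := boolP (~~ cyclic N && (#|N : H| == p)).
  by exists N; split; first exact: normal_sub nsHN.
have nsHP := normal_of_norm_normalizer (norm_normalizer_norms cH ntH oO notN).
have ntP : P :!=: 1 := subG1_contra sHP ntH.
move: oO; rewrite /N /= (setIidPl (normal_norm nsHP)) => /(prime_Ohm1P pP ntP).
case/orP=> [cP | /andP[_ /eqP/quaternion_classP[n n_gt2 isoP]]].
  by rewrite cP in ncP.
by case: nqP; exists n.
Qed.

End NoncyclicOvergroup.

Theorem proposition5p4 (gT : finGroupType) (p : nat) (P H : {group gT}) :
  prime p -> p.-group P -> ~~ cyclic P -> ~ gen_quaternion P ->
  H \proper P -> H :!=: 1 ->
  exists K' H' : {group gT},
    [/\ K' <| H', H' \subset P, K' \proper H, H \proper H'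
      & p.-abelem (H' / K')].
Proof.
move=> p_pr pP ncP nqP prHP ntH.
have [H' [sHH' sH'P iH'H ncH']] :=
  exists_noncyclic_overgroup p_pr pP (proper_sub prHP) ncP nqP prHP ntH.
have pH' : p.-group H' := pgroupS sH'P pP.
have maxH : maximal H H' by rewrite p_index_maximal ?iH'H.
exists 'Phi(H')%G, H'; split=> //.
- exact: Phi_normal.
- exact: Phi_proper_maximal pH' maxH ncH'.
- by rewrite properE sHH' -indexg_gt1 iH'H prime_gt1.
- exact: Phi_quotient_abelem.
Qed.
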